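(* Let $k$ be a commutative ring and $A$ a commutative $k$-algebra with $\mathbb Q\subset A$ such that $\operatorname{Der}_k(A)$ is a projective $A$-module of finite rank. Then the canonical homomorphism of graded $A$-algebras $\tau_{A/k}:\operatorname{Sym}\operatorname{Der}_k(A)\to\operatorname{gr}\operatorname{Diff}_{A/k}$ is an isomorphism.
   Context: $\operatorname{Diff}_{A/k}$ is the ring of $k$-linear differential operators of $A$ (order $0$ = multiplications by elements of $A$; $\varphi$ has order $\le i+1$ iff $\varphi\circ a-a\circ\varphi$ has order $\le i$ for all $a$), filtered by order; $\operatorname{gr}\operatorname{Diff}_{A/k}$ is the associated graded ring, which is commutative. $\tau_{A/k}$ is the graded $A$-algebra homomorphism induced by the $A$-linear isomorphism $\operatorname{Der}_k(A)\to\operatorname{gr}^1\operatorname{Diff}_{A/k}$, $\delta\mapsto\sigma_1(\delta)$ (class of $\delta$ modulo order $0$ operators). *)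

From HB Require Import structures.
From Stdlib Require List Relation_Operators.
From mathcomp Require Import all_boot all_order all_algebra.
Set Implicit Arguments. Unset Strict Implicit. Unset Printing Implicit Defensive.
Import GRing.Theory.
Local Open Scope ring_scope.

Section DiffOps.
Variables (k : comNzRingType) (A : comAlgType k).

Definition klinear (f : A -> A) : Prop :=
  (forall x y, f (x + y) = f x + f y) /\ (forall (c : k) x, f (c *: x) = c *: f x).

Definition isDer (d : A -> A) : Prop :=
  klinear d /\ (forall x y, d (x * y) = x * d y + y * d x).

Definition commut (phi : A -> A) (a : A) : A -> A := fun x => phi (a * x) - a * phi x.

Fixpoint diffop (i : nat) (phi : A -> A) : Prop :=
  match i with
  | 0 => exists a : A, forall x, phi x = a * x
  | i'.+1 => klinear phi /\ forall a : A, diffop i' (commut phi a)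
  end.

(* "order <= i - 1", with order <= -1 meaning the zero operator;
   the submodule one quotients by to get gr^i Diff *)
Definition ord_lt (i : nat) (phi : A -> A) : Prop :=
  match i with
  | 0 => forall x, phi x = 0
  | i'.+1 => diffop i' phi
  end.

Definition contains_Q : Prop := forall n : nat, exists b : A, b * (n.+1)%:R = 1.

(* Der_k(A) is a finitely generated projective A-module (dual basis lemma form) *)
Definition Der_fg_projective : Prop :=
  exists (n : nat) (ds : 'I_n -> A -> A) (phis : 'I_n -> (A -> A) -> A),
    [/\ forall j, isDer (ds j),
        forall j d e, isDer d -> isDer e -> (forall x, d x = e x) -> phis j d = phis j e,
        forall j (a : A) d e, isDer d -> isDer e ->
          phis j (fun x => a * d x + e x) = a * phis j d + phis j e &
        forall d, isDer d -> forall x, d x = \sum_(j < n) phis j d * ds j x].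

(* A term (a, [d1; ...; di]) stands for a * d1 d2 ... di ; a formal sum is a list. *)
Definition term := (A * seq (A -> A))%type.

Definition wf_term (i : nat) (t : term) : Prop :=
  size t.2 = i /\ forall d, List.In d t.2 -> isDer d.
Definition wf_sum (i : nat) (s : seq term) : Prop := forall t, List.In t s -> wf_term i t.

Inductive sym_basic : seq term -> seq term -> Prop :=
  | sb_swap t1 t2 : sym_basic [:: t1; t2] [:: t2; t1]
  | sb_merge a b w : sym_basic [:: (a, w); (b, w)] [:: (a + b, w)]
  | sb_zero w : sym_basic [:: (0, w)] [::]
  | sb_ext a u v d d' : (forall x, d x = d' x) ->
      sym_basic [:: (a, u ++ d :: v)] [:: (a, u ++ d' :: v)]
  | sb_add a u v d1 d2 :
      sym_basic [:: (a, u ++ (fun x => d1 x + d2 x) :: v)]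
                [:: (a, u ++ d1 :: v); (a, u ++ d2 :: v)]
  | sb_scale a b u v d :
      sym_basic [:: (a, u ++ (fun x => b * d x) :: v)] [:: (a * b, u ++ d :: v)]
  | sb_sym a u v d1 d2 :
      sym_basic [:: (a, u ++ d1 :: d2 :: v)] [:: (a, u ++ d2 :: d1 :: v)].

Definition sym_step (i : nat) (s t : seq term) : Prop :=
  exists p q r r', [/\ s = p ++ r ++ q, t = p ++ r' ++ q,
                       wf_sum i r, wf_sum i r' & sym_basic r r'].

Definition sym_eq (i : nat) : seq term -> seq term -> Prop :=
  Relation_Operators.clos_refl_sym_trans _ (sym_step i).

Definition word_op (w : seq (A -> A)) : A -> A := foldr (fun d f => d \o f) id w.
Definition tau (s : seq term) : A -> A := fun x => \sum_(t <- s) t.1 * word_op t.2 x.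

End DiffOps.

(* An operator [f] of order [<= m] is recorded by its symbol
   [(a_1, .., a_m) |-> [..[[f, a_1], a_2] .., a_m](1)], which is symmetric and a
   derivation in each argument, and which vanishes exactly when [f] has order [< m].
   The symbol of [a d_1 .. d_m] is [a sum_s prod_k d_(s k)(a_k)], so [tau] in degree
   [m] is the pairing of [Sym^m Der] with evaluations at points of [A].
   With a dual basis [(d_j, phi_j)] of the projective module [Der_k(A)] and [1/m] in
   [A], Euler's identity [s = 1/m sum_j d_j (s contracted with phi_j)] gives both
   halves by induction on [m]: a symmetric multi-derivation [Phi] is the symbol of
   [1/m sum_j d_j s_j], where [s_j] represents [Phi] contracted with [phi_j]; and if
   the symbol of [s] vanishes then so does that of each contraction (the [phi_j] are
   [A]-linear on derivations), so [s = 0] in [Sym^m]. *)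

From mathcomp Require Import all_boot all_algebra.
From mathcomp Require Import ring zify.
From Stdlib Require Import FunctionalExtensionality ClassicalEpsilon.
From Stdlib Require Import Relation_Operators Permutation.
Import GRing.Theory.
Local Open Scope ring_scope.
Set Implicit Arguments. Unset Strict Implicit.

Lemma eq_big_In (V : nmodType) (I : Type) (r : seq I) (F G : I -> V) :
  (forall i, List.In i r -> F i = G i) -> \sum_(i <- r) F i = \sum_(i <- r) G i.
Proof.
elim: r => [|i r IH] FG; first by rewrite !big_nil.
by rewrite !big_cons FG ?IH //; [move=> j rj; apply: FG; right | left].
Qed.

Lemma In_mem (T : eqType) (x : T) s : List.In x s -> x \in s.
Proof. by elim: s => [|y s IH] //= [<-|/IH xs]; rewrite in_cons ?eqxx ?xs ?orbT. Qed.

Lemma In_index_iota i m : List.In i (index_iota 0%N m) -> (i < m)%N.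
Proof. by move/In_mem; rewrite mem_index_iota. Qed.

Lemma In_nth (T : Type) (x0 : T) i (s : seq T) : (i < size s)%N -> List.In (nth x0 s i) s.
Proof. by elim: s i => [|y s IH] [|i] //= si; [left | right; apply: IH]. Qed.

Definition rem_nth (T : Type) (i : nat) (s : seq T) := take i s ++ drop i.+1 s.

Lemma size_rem_nth (T : Type) i (s : seq T) :
  (i < size s)%N -> size (rem_nth i s) = (size s).-1.
Proof. by move=> si; rewrite /rem_nth size_cat size_take size_drop si; lia. Qed.

Lemma rem_nth_map (T U : Type) (f : T -> U) i (s : seq T) :
  rem_nth i (map f s) = map f (rem_nth i s).
Proof. by rewrite /rem_nth map_cat map_take map_drop. Qed.

Lemma rem_nth_cons0 (T : Type) (x : T) s : rem_nth 0%N (x :: s) = s.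
Proof. by rewrite /rem_nth /= drop0. Qed.

Lemma rem_nth_consS (T : Type) i (x : T) s : rem_nth i.+1 (x :: s) = x :: rem_nth i s.
Proof. by []. Qed.

Lemma In_rem_nth (T : Type) i (s : seq T) x : List.In x (rem_nth i s) -> List.In x s.
Proof.
rewrite /rem_nth; elim: s i => [|y s IH] [|i] //=; first by rewrite drop0; right.
by move=> [->|/IH]; [left | right].
Qed.

Lemma cat_take_nth_drop (T : Type) (x0 : T) i (s : seq T) :
  (i < size s)%N -> s = take i s ++ nth x0 s i :: drop i.+1 s.
Proof. by move=> si; rewrite -drop_nth // cat_take_drop. Qed.

Lemma perm_flatten_cat (T I : Type) (r : seq I) (f g : I -> seq T) :
  Permutation (flatten (map f r) ++ flatten (map g r)) (flatten [seq f i ++ g i | i <- r]).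
Proof.
elim: r => //= i r IH; rewrite -!catA; apply: Permutation_app_head.
exact: perm_trans (Permutation_app_swap_app _ _ _) (Permutation_app_head _ IH).
Qed.

Lemma perm_flatten_transpose (T I J : Type) (ri : seq I) (rj : seq J) (f : I -> J -> seq T) :
  Permutation (flatten [seq flatten [seq f i j | j <- rj] | i <- ri])
              (flatten [seq flatten [seq f i j | i <- ri] | j <- rj]).
Proof.
elim: ri => [|i ri IH] /=; first by elim: rj.
exact: perm_trans (Permutation_app_head _ IH) (perm_flatten_cat _ _ _).
Qed.

Section DiffOps.
Variables (k : comNzRingType) (A : comAlgType k).
Notation op := (A -> A).

Lemma fun_sum_nil (I : Type) (F : I -> op) :
  (fun x => \sum_(i <- [::]) F i x) = (fun=> 0).
Proof. by apply: functional_extensionality => x; rewrite big_nil. Qed.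

Lemma fun_sum_cons (I : Type) (i : I) (r : seq I) (F : I -> op) :
  (fun x => \sum_(j <- i :: r) F j x) = (fun x => F i x + \sum_(j <- r) F j x).
Proof. by apply: functional_extensionality => x; rewrite big_cons. Qed.

Lemma fun_sum_closed (P : op -> Prop) (I : Type) (r : seq I) (F : I -> op) :
  P (fun=> 0) -> (forall f g, P f -> P g -> P (fun x => f x + g x)) ->
  (forall i, List.In i r -> P (F i)) -> P (fun x => \sum_(i <- r) F i x).
Proof.
move=> P0 PD; elim: r => [|i r IH] PF; first by rewrite fun_sum_nil.
rewrite fun_sum_cons; apply: PD; first by apply: PF; left.
by apply: IH => j rj; apply: PF; right.
Qed.

Lemma klinear_mul (c : A) : klinear (fun x => c * x).
Proof. by split=> [x y|a x]; [rewrite mulrDr | rewrite scalerAr]. Qed.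

Lemma klinear0 (f : op) : klinear f -> f 0 = 0.
Proof. by move=> [fD _]; apply: (addrI (f 0)); rewrite -fD !addr0. Qed.

Lemma klinearB (f : op) x y : klinear f -> f (x - y) = f x - f y.
Proof. by move=> [fD _]; apply: (addIr (f y)); rewrite -fD !subrK. Qed.

Lemma klinear_sum (f : op) (I : Type) (r : seq I) (F : I -> A) :
  klinear f -> f (\sum_(i <- r) F i) = \sum_(i <- r) f (F i).
Proof.
move=> fL; elim: r => [|i r IH]; first by rewrite !big_nil klinear0.
by rewrite !big_cons fL.1 IH.
Qed.

Lemma diffop_klinear n (f : op) : diffop n f -> klinear f.
Proof.
case: n => [[c fc]|n [fL _]] //.
have -> : f = (fun x => c * x) by apply: functional_extensionality.
exact: klinear_mul.
Qed.

Lemma diffop_zero n : diffop n (fun=> 0 : A).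
Proof.
elim: n => [|n IH]; first by exists 0 => x; rewrite mul0r.
split; first by split=> *; rewrite ?addr0 ?scaler0.
move=> a; have -> // : commut (fun=> 0) a = (fun=> 0).
by apply: functional_extensionality => x; rewrite /commut mulr0 subr0.
Qed.

Lemma diffop_id : diffop 0 (fun x : A => x).
Proof. by exists 1 => x; rewrite mul1r. Qed.

Lemma diffop0E (f : op) : diffop 0 f -> forall x, f x = f 1 * x.
Proof. by move=> [c fc] x; rewrite !fc mulr1. Qed.

Lemma diffop_lmul n (c : A) (f : op) : diffop n f -> diffop n (fun x => c * f x).
Proof.
elim: n f => [|n IH] f; first by move=> [a fa]; exists (c * a) => x; rewrite fa mulrA.
move=> [[fD fZ] fC]; split; first by split=> *; rewrite ?fD ?fZ ?mulrDr // scalerAr.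
move=> a; have -> : commut (fun x => c * f x) a = (fun x => c * commut f a x).
  by apply: functional_extensionality => x; rewrite /commut; ring.
exact: IH (fC a).
Qed.

Lemma diffop_rmul n (c : A) (f : op) : diffop n f -> diffop n (fun x => f (c * x)).
Proof.
elim: n f => [|n IH] f; first by move=> [a fa]; exists (a * c) => x; rewrite fa mulrA.
move=> [[fD fZ] fC]; split; first by split=> *; rewrite ?mulrDr ?fD // -fZ scalerAr.
move=> a; have -> : commut (fun x => f (c * x)) a = (fun x => commut f a (c * x)).
  by apply: functional_extensionality => x; rewrite /commut mulrCA.
exact: IH (fC a).
Qed.

Lemma diffopD n (f g : op) : diffop n f -> diffop n g -> diffop n (fun x => f x + g x).
Proof.
elim: n f g => [|n IH] f g.
  by move=> [a fa] [b gb]; exists (a + b) => x; rewrite fa gb mulrDl.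
move=> [[fD fZ] fC] [[gD gZ] gC]; split.
  by split=> *; rewrite ?fD ?fZ ?gD ?gZ ?scalerDr //; ring.
move=> a; have -> : commut (fun x => f x + g x) a = (fun x => commut f a x + commut g a x).
  by apply: functional_extensionality => x; rewrite /commut; ring.
exact: IH (fC a) (gC a).
Qed.

Lemma diffopB n (f g : op) : diffop n f -> diffop n g -> diffop n (fun x => f x - g x).
Proof.
move=> fn /(diffop_lmul (-1)) gn.
have -> : (fun x => f x - g x) = (fun x => f x + -1 * g x).
  by apply: functional_extensionality => x; rewrite mulN1r.
exact: diffopD.
Qed.

Lemma commut_comp (f g : op) a : klinear f ->
  commut (f \o g) a = (fun x => f (commut g a x) + commut f a (g x)).
Proof.
move=> fL; apply: functional_extensionality => x.
by rewrite /commut /= (klinearB _ _ fL); ring.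
Qed.

Lemma diffop_comp m n (f g : op) : diffop m f -> diffop n g -> diffop (m + n) (f \o g).
Proof.
elim: m n f g => [|m IHm] n f g.
  move=> [c fc] gn; have -> : f \o g = (fun x => c * g x).
    by apply: functional_extensionality => x; rewrite /= fc.
  exact: diffop_lmul.
elim: n f g => [|n IHn] f g fm.
  move=> [c gc]; rewrite addn0; have -> : f \o g = (fun x => f (c * x)).
    by apply: functional_extensionality => x; rewrite /= gc.
  exact: diffop_rmul.
move=> gn; have [fD fZ] := diffop_klinear fm; have [gD gZ] := diffop_klinear gn.
split; first by split=> *; rewrite /= ?gD ?fD ?gZ ?fZ.
move=> a; rewrite commut_comp // -addSnnS; apply: diffopD.
  by have := IHn f (commut g a) fm (gn.2 a); rewrite addSn.
by rewrite addSn -addnS; apply: IHm (fm.2 a) gn.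
Qed.

Lemma isDer_diffop1 (d : op) : isDer d -> diffop 1 d.
Proof. by move=> [dL dM]; split=> // a; exists (d a) => x; rewrite /commut dM; ring. Qed.

Lemma isDer_zero : isDer (fun=> 0 : A).
Proof. by split; first split=> *; rewrite ?addr0 ?scaler0 // => x y; rewrite !mulr0 addr0. Qed.

Lemma isDerD (d e : op) : isDer d -> isDer e -> isDer (fun x => d x + e x).
Proof.
move=> [[dD dZ] dM] [[eD eZ] eM]; split; first split=> *.
- by rewrite dD eD; ring.
- by rewrite dZ eZ scalerDr.
by move=> x y; rewrite dM eM; ring.
Qed.

Lemma isDer_lmul (c : A) (d : op) : isDer d -> isDer (fun x => c * d x).
Proof.
move=> [[dD dZ] dM]; split; first split=> *.
- by rewrite dD mulrDr.
- by rewrite dZ scalerAr.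
by move=> x y; rewrite dM; ring.
Qed.

Lemma isDer_rmul (c : A) (d : op) : isDer d -> isDer (fun x => d x * c).
Proof.
have -> : (fun x => d x * c) = (fun x => c * d x).
  by apply: functional_extensionality => x; rewrite mulrC.
exact: isDer_lmul.
Qed.

Lemma isDer_sum (I : Type) (r : seq I) (F : I -> op) :
  (forall i, List.In i r -> isDer (F i)) -> isDer (fun x => \sum_(i <- r) F i x).
Proof. by apply: fun_sum_closed; [exact: isDer_zero | exact: isDerD]. Qed.

Lemma ord_ltD m (f g : op) : ord_lt m f -> ord_lt m g -> ord_lt m (fun x => f x + g x).
Proof. by case: m => [fm gm x|m]; [rewrite fm gm addr0 | exact: diffopD]. Qed.

Lemma ord_lt_lmul m c (f : op) : ord_lt m f -> ord_lt m (fun x => c * f x).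
Proof. by case: m => [f0 x|m]; [rewrite f0 mulr0 | exact: diffop_lmul]. Qed.

Lemma ord_lt_sum m (I : Type) (r : seq I) (F : I -> op) :
  (forall i, List.In i r -> ord_lt m (F i)) -> ord_lt m (fun x => \sum_(i <- r) F i x).
Proof.
apply: fun_sum_closed; last exact: ord_ltD.
by case: m => [//|m]; exact: diffop_zero.
Qed.

Lemma ord_lt_commut m (f : op) a : ord_lt m.+1 f -> ord_lt m (commut f a).
Proof.
case: m => [[c fc]|m [_ fC]] /=; last exact: fC.
by move=> x; rewrite /commut !fc; ring.
Qed.

Lemma ord_lt_der_comp m (d f : op) : isDer d -> ord_lt m.-1 f -> ord_lt m (d \o f).
Proof.
move=> dD; have d0 : d 0 = 0 by apply: klinear0; case: dD.
case: m => [f0 x|[f0|m fm]] /=; first by rewrite f0.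
  by exists 0 => x; rewrite f0 mul0r.
exact: diffop_comp (isDer_diffop1 dD) fm.
Qed.

Definition iter_commut (f : op) (l : seq A) : op := foldl (fun g a => commut g a) f l.

Lemma iter_commut_vanish m (f : op) (l : seq A) :
  ord_lt m f -> size l = m -> forall x, iter_commut f l x = 0.
Proof.
move=> fm sl; subst m; elim: l f fm => [|a l IH] f fl //=.
exact: IH (ord_lt_commut a fl).
Qed.

Lemma iter_commut_linear (c : A) (f g : op) l :
  iter_commut (fun x => c * f x + g x) l = (fun x => c * iter_commut f l x + iter_commut g l x).
Proof.
elim: l f g => [|a l IH] f g //=; rewrite -IH; congr iter_commut.
by apply: functional_extensionality => x; rewrite /commut; ring.
Qed.

Lemma iter_commutD (f g : op) l :
  iter_commut (fun x => f x + g x) l = (fun x => iter_commut f l x + iter_commut g l x).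
Proof.
have -> : (fun x => f x + g x) = (fun x => 1 * f x + g x).
  by apply: functional_extensionality => x; rewrite mul1r.
by rewrite iter_commut_linear; apply: functional_extensionality => x; rewrite mul1r.
Qed.

Lemma iter_commut0 l : iter_commut (fun=> 0 : A) l = (fun=> 0).
Proof.
elim: l => [|a l IH] //=; rewrite -{2}IH; congr iter_commut.
by apply: functional_extensionality => x; rewrite /commut mulr0 subr0.
Qed.

Lemma iter_commut_lmul (c : A) (f : op) l :
  iter_commut (fun x => c * f x) l = (fun x => c * iter_commut f l x).
Proof.
have -> : (fun x => c * f x) = (fun x => c * f x + (fun=> 0) x).
  by apply: functional_extensionality => x; rewrite addr0.
rewrite iter_commut_linear iter_commut0.
by apply: functional_extensionality => x; rewrite addr0.
Qed.

Lemma iter_commutB (f g : op) l :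
  iter_commut (fun x => f x - g x) l = (fun x => iter_commut f l x - iter_commut g l x).
Proof.
have -> : (fun x => f x - g x) = (fun x => -1 * g x + f x).
  by apply: functional_extensionality => x; rewrite mulN1r addrC.
by rewrite iter_commut_linear; apply: functional_extensionality => x; rewrite mulN1r addrC.
Qed.

Lemma iter_commut_sum (I : Type) (r : seq I) (F : I -> op) l :
  iter_commut (fun x => \sum_(i <- r) F i x) l = (fun x => \sum_(i <- r) iter_commut (F i) l x).
Proof.
elim: r => [|i r IH]; first by rewrite !fun_sum_nil iter_commut0.
by rewrite !fun_sum_cons iter_commutD IH.
Qed.

Lemma iter_commut_swap (f : op) u a b v :
  iter_commut f (u ++ a :: b :: v) = iter_commut f (u ++ b :: a :: v).
Proof.
rewrite /iter_commut !foldl_cat /=; congr foldl.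
by apply: functional_extensionality => x; rewrite /commut (mulrCA b a x); ring.
Qed.

Lemma iter_commut_move (f : op) p a u v :
  iter_commut f (p ++ a :: u ++ v) = iter_commut f (p ++ u ++ a :: v).
Proof.
elim: u p => [|b u IH] p //=.
by rewrite iter_commut_swap -[p ++ b :: _]/(p ++ [:: b] ++ _) catA IH -catA.
Qed.

Lemma diffop_iter_commut m n (f : op) l :
  diffop (m + n) f -> size l = m -> diffop n (iter_commut f l).
Proof.
elim: l m f => [|a l IH] [|m] f //= fmn [sl].
by apply: IH sl; apply: fmn.2.
Qed.

Lemma ord_lt_iter_commut m (f : op) : diffop m f ->
  (forall l, size l = m -> forall x, iter_commut f l x = 0) -> ord_lt m f.
Proof.
elim: m f => [|m IH] f fm f0; first exact: (f0 [::]).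
case: m IH fm f0 => [|m] IH fm f0 /=.
  exists (f 1) => x; apply/eqP; rewrite mulrC -subr_eq0.
  by have := f0 [:: x] erefl 1; rewrite /= /commut mulr1 => ->.
split; first exact: diffop_klinear fm.
move=> a; apply: IH (fm.2 a) _ => l sl x.
by apply: (f0 (a :: l)); rewrite /= sl.
Qed.

Definition allDer (w : seq op) := forall d, List.In d w -> isDer d.

Lemma allDer_cons d w : allDer (d :: w) <-> isDer d /\ allDer w.
Proof.
split=> [wD|[dD wD] e [<-|]] //; last exact: wD.
by split=> [|e ew]; apply: wD; [left | right].
Qed.

Lemma allDer_cat (u v : seq op) : allDer (u ++ v) <-> allDer u /\ allDer v.
Proof.
split=> [uvD|[uD vD] d duv]; last by case: (List.in_app_or _ _ _ duv); [apply: uD | apply: vD].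
by split=> d dw; apply: uvD; apply: List.in_or_app; [left | right].
Qed.

Lemma allDer_nth i w : allDer w -> (i < size w)%N -> isDer (nth id w i).
Proof. by move=> wD si; apply: wD; apply: In_nth. Qed.

Lemma allDer_rem_nth i w : allDer w -> allDer (rem_nth i w).
Proof. by move=> wD d dw; apply: wD; apply: In_rem_nth dw. Qed.

Lemma allDer_swap (u v : seq op) d e : allDer (u ++ d :: e :: v) -> allDer (u ++ e :: d :: v).
Proof.
move=> /allDer_cat [uD /allDer_cons [dD /allDer_cons [eD vD]]].
by apply/allDer_cat; split=> //; do 2!(apply/allDer_cons; split=> //).
Qed.

Lemma word_diffop w : allDer w -> diffop (size w) (word_op w).
Proof.
elim: w => [_|d w IH /allDer_cons [dD wD]]; first exact: diffop_id.
exact: diffop_comp (isDer_diffop1 dD) (IH wD).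
Qed.

Lemma ord_lt_word_rem_nth i w : allDer w -> (i < size w)%N ->
  ord_lt (size w) (word_op (rem_nth i w)).
Proof.
move=> wD si; have := word_diffop (allDer_rem_nth (i := i) wD).
by rewrite size_rem_nth //; case: (size w) si.
Qed.

Lemma commut_der_comp (d f : op) a : isDer d ->
  commut (d \o f) a = (fun x => d (commut f a x) + d a * f x).
Proof.
move=> [dL dM]; rewrite commut_comp //; apply: functional_extensionality => x.
by rewrite /commut dM; congr (_ + _); ring.
Qed.

Definition commut_lead (w : seq op) (a : A) : op :=
  fun x => \sum_(0 <= i < size w) nth id w i a * word_op (rem_nth i w) x.

Lemma commut_lead_cons (d : op) w a x : isDer d ->
  commut (word_op (d :: w)) a x - commut_lead (d :: w) a x =
  \sum_(0 <= i < size w) d (nth id w i a) * word_op (rem_nth i w) x +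
  d (commut (word_op w) a x - commut_lead w a x).
Proof.
move=> dD; have [dL dM] := dD.
rewrite [word_op (d :: w)]/= commut_der_comp // /commut_lead [size _]/= big_nat_recl //.
rewrite rem_nth_cons0 (klinearB (commut (word_op w) a x) _ dL) (klinear_sum _ _ dL).
under eq_bigr do rewrite rem_nth_consS [word_op _]/= /comp.
under [X in _ = _ + (_ - X)]eq_bigr do rewrite dM [word_op _ _ * _]mulrC.
rewrite big_split /=; ring.
Qed.

Lemma word_commut w a : allDer w ->
  ord_lt (size w).-1 (fun x => commut (word_op w) a x - commut_lead w a x).
Proof.
elim: w => [_ x|d w IH /allDer_cons [dD wD]].
  by rewrite /commut_lead big_nil /commut /= subrr subr0.
have -> : (fun x => commut (word_op (d :: w)) a x - commut_lead (d :: w) a x) =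
  (fun x => \sum_(0 <= i < size w) d (nth id w i a) * word_op (rem_nth i w) x +
            (d \o (fun x => commut (word_op w) a x - commut_lead w a x)) x).
  by apply: functional_extensionality => x; exact: commut_lead_cons.
apply: ord_ltD; last exact: ord_lt_der_comp dD (IH wD).
by apply: ord_lt_sum => i /In_index_iota si; apply/ord_lt_lmul/ord_lt_word_rem_nth.
Qed.

Definition ev (a : A) : op -> A := fun d => d a.

(* [pair_word [:: F_1; ..; F_m] w] is the sum over all bijections s of
   [prod_k F_k (w_(s k))] (and [0] if the lengths differ). *)
Fixpoint pair_word (Fs : seq (op -> A)) (w : seq op) : A :=
  match Fs with
  | [::] => if w is [::] then 1 else 0
  | F :: Fs' => \sum_(0 <= i < size w) F (nth id w i) * pair_word Fs' (rem_nth i w)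
  end.

Definition pair_sum (Fs : seq (op -> A)) (s : seq (term A)) : A :=
  \sum_(t <- s) t.1 * pair_word Fs t.2.

Lemma iter_commut_word l w : allDer w -> size w = size l ->
  forall x, iter_commut (word_op w) l x = pair_word (map ev l) w * x.
Proof.
elim: l w => [|a l IH] [|d w] //= wD sw x; first by rewrite mul1r.
rewrite -/(word_op (d :: w)).
have -> : commut (word_op (d :: w)) a = (fun x => commut_lead (d :: w) a x +
    (commut (word_op (d :: w)) a x - commut_lead (d :: w) a x)).
  by apply: functional_extensionality => y; rewrite addrC subrK.
rewrite iter_commutD (iter_commut_vanish (word_commut a wD)); last by case: sw.
rewrite addr0 /commut_lead iter_commut_sum big_distrl /=.
apply: eq_big_nat => i /andP [_ si]; rewrite iter_commut_lmul IH /ev ?mulrA //.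
  exact: allDer_rem_nth.
by rewrite size_rem_nth //; case: sw.
Qed.

Lemma iter_commut_tau m s l : wf_sum m s -> size l = m ->
  forall x, iter_commut (tau s) l x = pair_sum (map ev l) s * x.
Proof.
move=> sW sl x; rewrite /tau iter_commut_sum /pair_sum big_distrl /=.
apply: eq_big_In => t /sW [st tD].
by rewrite iter_commut_lmul iter_commut_word ?mulrA // st.
Qed.

Lemma tau_diffop m (s : seq (term A)) : wf_sum m s -> diffop m (tau s).
Proof.
move=> sW; apply: (fun_sum_closed (P := diffop m)) => [|f g|t /sW [<- tD]].
- exact: diffop_zero.
- exact: diffopD.
- exact/diffop_lmul/word_diffop.
Qed.

Definition sym_multider m (Phi : seq A -> A) :=
  (forall l i, (i < size l)%N -> Phi (nth 0 l i :: rem_nth i l) = Phi l) /\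
  ((0 < m)%N -> forall l, size l = m.-1 -> isDer (fun a => Phi (a :: l))).

Lemma sym_multider_swap m Phi : sym_multider m Phi ->
  forall a b l, Phi (a :: b :: l) = Phi (b :: a :: l).
Proof. by move=> [PS _] a b l; rewrite -(PS (b :: a :: l) 1%N) // /rem_nth /= drop0. Qed.

Lemma commut1_isDer (f : op) : diffop 1 f -> isDer (fun a => commut f a 1).
Proof.
move=> [[fD fZ] fC]; split; first split=> [x y|c x].
- by rewrite /commut !mulr1 fD; ring.
- by rewrite /commut !mulr1 fZ -scalerAl scalerBr.
move=> x y; have [c fxc] := fC x.
have fxy : f (x * y) = x * f y + (f x - x * f 1) * y.
  have := fxc y; have := fxc 1; rewrite /commut !mulr1 => <- /eqP.
  by rewrite subr_eq => /eqP ->; ring.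
by rewrite /commut !mulr1 fxy; ring.
Qed.

Lemma symbol_multider m (f : op) : diffop m f ->
  sym_multider m (fun l => iter_commut f l 1).
Proof.
move=> fm; split=> [l i si|m0 l sl] /=.
  by rewrite {3}(cat_take_nth_drop 0 si) -(iter_commut_move f [::]).
have -> : (fun a => iter_commut f (a :: l) 1) = (fun a => commut (iter_commut f l) a 1).
  apply: functional_extensionality => a.
  by have := iter_commut_move f [::] a l [::]; rewrite /= cats0 /iter_commut foldl_cat => ->.
apply/commut1_isDer/(diffop_iter_commut (m := m.-1)) => //.
by rewrite addn1 prednK.
Qed.

Notation terms := (seq (term A)).

Lemma wf_cons m (t : term A) (s : terms) : wf_sum m (t :: s) <-> wf_term m t /\ wf_sum m s.
Proof.
split=> [sW|[tW sW] u [<-|]] //; last exact: sW.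
by split=> [|u us]; apply: sW; [left | right].
Qed.

Lemma wf_cat m (s t : terms) : wf_sum m (s ++ t) <-> wf_sum m s /\ wf_sum m t.
Proof.
split=> [stW|[sW tW] u ust]; last by case: (List.in_app_or _ _ _ ust); [apply: sW | apply: tW].
by split=> u us; apply: stW; apply: List.in_or_app; [left | right].
Qed.

Lemma wf_flatten m (I : Type) (r : seq I) (f : I -> terms) :
  (forall i, List.In i r -> wf_sum m (f i)) -> wf_sum m (flatten (map f r)).
Proof.
elim: r => [|i r IH] fW //=; apply/wf_cat; split; first by apply: fW; left.
by apply: IH => j rj; apply: fW; right.
Qed.

Lemma sym_eq_refl m (s : terms) : sym_eq m s s.
Proof. exact: rst_refl. Qed.

Lemma sym_eq_sym m (s t : terms) : sym_eq m s t -> sym_eq m t s.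
Proof. exact: rst_sym. Qed.

Lemma sym_eq_trans m (s t u : terms) : sym_eq m s t -> sym_eq m t u -> sym_eq m s u.
Proof. exact: rst_trans. Qed.

Lemma sym_eq_ctx m (p q s s' : terms) : sym_eq m s s' -> sym_eq m (p ++ s ++ q) (p ++ s' ++ q).
Proof.
elim=> [x y [p0 [q0 [r [r' [-> -> rW r'W rr']]]]]| x | x y _ IH | x y z _ IH1 _ IH2].
- by apply: rst_step; exists (p ++ p0), (q0 ++ q), r, r'; rewrite -!catA.
- exact: rst_refl.
- exact: rst_sym.
- exact: rst_trans IH2.
Qed.

Lemma sym_eq_cat m (s1 s2 t1 t2 : terms) :
  sym_eq m s1 t1 -> sym_eq m s2 t2 -> sym_eq m (s1 ++ s2) (t1 ++ t2).
Proof.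
move=> e1 e2; apply: sym_eq_trans (_ : sym_eq m (t1 ++ s2) _).
  by have := sym_eq_ctx [::] s2 e1; rewrite /=.
by have := sym_eq_ctx t1 [::] e2; rewrite !cats0.
Qed.

Lemma sym_eq_basic m (r r' : terms) :
  wf_sum m r -> wf_sum m r' -> sym_basic r r' -> sym_eq m r r'.
Proof. by move=> rW r'W rr'; apply: rst_step; exists [::], [::], r, r'; rewrite /= !cats0. Qed.

Lemma sym_eq_perm m (s t : terms) : wf_sum m s -> Permutation s t -> sym_eq m s t.
Proof.
move=> + st; elim: st => {s t} [|x s t st IH|x y s|s t u st IH1 tu IH2] sW.
- exact: rst_refl.
- case/wf_cons: sW => xW sW.
  by have := sym_eq_ctx [:: x] [::] (IH sW); rewrite /= !cats0.
- case/wf_cons: sW => yW /wf_cons [xW sW].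
  have yxW : wf_sum m [:: y; x] by move=> u [<-|[<-|[]]].
  have xyW : wf_sum m [:: x; y] by move=> u [<-|[<-|[]]].
  exact: (sym_eq_ctx [::] s (sym_eq_basic yxW xyW (sb_swap _ _))).
- apply: sym_eq_trans (IH1 sW) (IH2 _) => v tv; apply: sW.
  exact: Permutation_in (Permutation_sym st) tv.
Qed.

Lemma sym_eq_flatten m (I : Type) (r : seq I) (f g : I -> terms) :
  (forall i, List.In i r -> sym_eq m (f i) (g i)) ->
  sym_eq m (flatten (map f r)) (flatten (map g r)).
Proof.
elim: r => [|i r IH] fg /=; first exact: sym_eq_refl.
by apply: sym_eq_cat; [apply: fg; left | apply: IH => j rj; apply: fg; right].
Qed.

Lemma sym_eq_flatten0 m (I : Type) (r : seq I) (f : I -> terms) :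
  (forall i, List.In i r -> sym_eq m (f i) [::]) -> sym_eq m (flatten (map f r)) [::].
Proof.
elim: r => [|i r IH] f0 /=; first exact: sym_eq_refl.
exact: sym_eq_cat (f0 i (or_introl erefl)) (IH (fun j rj => f0 j (or_intror rj))).
Qed.

Lemma sym_eq_merge m (I : Type) (r : seq I) (c : I -> A) (w : seq op) :
  size w = m -> allDer w -> sym_eq m [seq (c i, w) | i <- r] [:: (\sum_(i <- r) c i, w)].
Proof.
move=> sw wD; have tW a : wf_sum m [:: (a, w)] by move=> t [<-|[]].
elim: r => [|i r IH] /=.
  by rewrite big_nil; apply/sym_eq_sym/sym_eq_basic/sb_zero.
apply: sym_eq_trans (_ : sym_eq m [:: (c i, w); (\sum_(j <- r) c j, w)] _).
  by have := sym_eq_ctx [:: (c i, w)] [::] IH; rewrite !cats0.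
rewrite big_cons; apply: sym_eq_basic (tW _) (sb_merge _ _ _).
by move=> t [<-|[<-|[]]].
Qed.

Lemma sym_eq_move m (c : A) (p u v : seq op) (d : op) :
  size (p ++ d :: u ++ v) = m -> allDer (p ++ d :: u ++ v) ->
  sym_eq m [:: (c, p ++ d :: u ++ v)] [:: (c, p ++ u ++ d :: v)].
Proof.
elim: u p => [|x u IH] p sw wD /=; first exact: sym_eq_refl.
apply: sym_eq_trans (_ : sym_eq m [:: (c, (p ++ [:: x]) ++ d :: u ++ v)] _).
  rewrite -catA; apply: sym_eq_basic (sb_sym _ _ _ _ _); first by move=> t [<-|[]].
  by move=> t [<-|[]]; split; [rewrite -sw !size_cat | apply: allDer_swap].
have := IH (p ++ [:: x]); rewrite -!catA /=; apply; last exact: allDer_swap.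
by rewrite -sw !size_cat.
Qed.

Definition mul_der (d : op) (b : A) (s : terms) : terms := [seq (b * t.1, d :: t.2) | t <- s].

Lemma wf_mul_der m d b (s : terms) : isDer d -> wf_sum m s -> wf_sum m.+1 (mul_der d b s).
Proof.
move=> dD sW t /List.in_map_iff [u [<- us]]; have [su uD] := sW u us.
by split; [rewrite /= su | apply/allDer_cons].
Qed.

Lemma sym_eq_mul_der m d b (s t : terms) : isDer d ->
  sym_eq m s t -> sym_eq m.+1 (mul_der d b s) (mul_der d b t).
Proof.
move=> dD; elim=> [x y [p [q [r [r' [-> -> rW r'W rr']]]]]| x | x y _ IH | x y z _ IH1 _ IH2].
- apply: rst_step; exists (mul_der d b p), (mul_der d b q), (mul_der d b r), (mul_der d b r').
  rewrite /mul_der !map_cat; split=> //; try exact: wf_mul_der.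
  case: rr' => /= [*|a c w|w|a u v d1 d2 e|a u v d1 d2|a c u v d1|a u v d1 d2].
  + exact: sb_swap.
  + by rewrite mulrDr; apply: sb_merge.
  + by rewrite mulr0; apply: sb_zero.
  + exact: (sb_ext (b * a) (d :: u) v e).
  + exact: (sb_add (b * a) (d :: u) v d1 d2).
  + by rewrite mulrA; apply: (sb_scale (b * a) c (d :: u) v d1).
  + exact: (sb_sym (b * a) (d :: u) v d1 d2).
- exact: rst_refl.
- exact: rst_sym.
- exact: rst_trans IH2.
Qed.

Definition contract (F : op -> A) (s : terms) : terms :=
  flatten [seq [seq (t.1 * F (nth id t.2 i), rem_nth i t.2) | i <- index_iota 0 (size t.2)]
          | t <- s].

Lemma wf_contract m F (s : terms) : wf_sum m.+1 s -> wf_sum m (contract F s).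
Proof.
move=> sW; apply: wf_flatten => t /sW [st tD] u /List.in_map_iff [i [<- /In_index_iota si]].
by split; [rewrite /= size_rem_nth // st | apply: allDer_rem_nth].
Qed.

Lemma pair_sum_cat Fs (s t : terms) : pair_sum Fs (s ++ t) = pair_sum Fs s + pair_sum Fs t.
Proof. exact: big_cat. Qed.

Lemma pair_sum_flatten Fs (I : Type) (r : seq I) (f : I -> terms) :
  pair_sum Fs (flatten (map f r)) = \sum_(i <- r) pair_sum Fs (f i).
Proof.
elim: r => [|i r IH]; first by rewrite big_nil /pair_sum big_nil.
by rewrite /= pair_sum_cat IH big_cons.
Qed.

Lemma pair_sum_contract Fs F (s : terms) : pair_sum Fs (contract F s) = pair_sum (F :: Fs) s.
Proof.
rewrite pair_sum_flatten /pair_sum; apply: eq_bigr => t _.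
by rewrite big_map big_distrr; apply: eq_bigr => i _ /=; rewrite mulrA.
Qed.

Lemma pair_word_cons Fs d w :
  pair_word Fs (d :: w) =
  \sum_(0 <= p < size Fs) nth (fun=> 0) Fs p d * pair_word (rem_nth p Fs) w.
Proof.
elim: Fs w => [|F Fs IH] w; first by rewrite big_geq.
rewrite [LHS]/= [size _]/= !big_nat_recl // !rem_nth_cons0 /=; congr (_ + _).
under eq_bigr do rewrite rem_nth_consS IH big_distrr.
rewrite exchange_big /=; apply: eq_bigr => p _; rewrite big_distrr /=.
by apply: eq_bigr => i _; rewrite mulrCA.
Qed.

Lemma pair_sum_mul_der Fs d b (s : terms) :
  pair_sum Fs (mul_der d b s) =
  b * \sum_(0 <= p < size Fs) nth (fun=> 0) Fs p d * pair_sum (rem_nth p Fs) s.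
Proof.
rewrite /pair_sum big_map.
under eq_bigr do rewrite pair_word_cons big_distrr.
rewrite exchange_big big_distrr; apply: eq_bigr => p _ /=.
by rewrite !big_distrr; apply: eq_bigr => t _ /=; ring.
Qed.

Lemma sym_eq_der0 (c : A) v :
  allDer v -> sym_eq (size v).+1 [:: (c, (fun _ : A => 0 : A) :: v)] [::].
Proof.
move=> vD; have zW a e : isDer e -> wf_sum (size v).+1 [:: (a, e :: v)].
  by move=> eD t [<-|[]]; split=> //; apply/allDer_cons.
have -> : (fun _ : A => 0 : A) = (fun x => 0 * (fun _ : A => 0 : A) x).
  by apply: functional_extensionality => x; rewrite mul0r.
apply: sym_eq_trans (_ : sym_eq _ [:: (c * 0, (fun=> 0) :: v)] _).
  apply: sym_eq_basic _ (zW _ _ isDer_zero) (sb_scale c 0 [::] v _).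
  exact: zW (isDer_lmul _ isDer_zero).
by rewrite mulr0; apply: sym_eq_basic (zW _ _ isDer_zero) _ (sb_zero _).
Qed.

Lemma sym_eq_split_der (I : Type) (r : seq I) (c : A) (f : I -> A) (e : I -> op) v :
  (forall i, isDer (e i)) -> allDer v ->
  sym_eq (size v).+1 [:: (c, (fun x => \sum_(i <- r) f i * e i x) :: v)]
                     [seq (c * f i, e i :: v) | i <- r].
Proof.
move=> eD vD; have tW a d : isDer d -> wf_sum (size v).+1 [:: (a, d :: v)].
  by move=> dD t [<-|[]]; split=> //; apply/allDer_cons.
have sumD r' : isDer (fun x => \sum_(i <- r') f i * e i x).
  by apply: isDer_sum => i _; apply: isDer_lmul.
elim: r => [|i r IH]; first by rewrite fun_sum_nil; apply: sym_eq_der0.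
rewrite fun_sum_cons /=.
apply: sym_eq_trans (_ : sym_eq _ [:: (c, (fun x => f i * e i x) :: v);
                                 (c, (fun x => \sum_(j <- r) f j * e j x) :: v)] _).
  apply: sym_eq_basic (tW _ _ (isDerD (isDer_lmul _ (eD i)) (sumD r))) _ (sb_add _ [::] _ _ _).
  by move=> t [<-|[<-|[]]]; split=> //; apply/allDer_cons; split=> //; apply: isDer_lmul.
have e1 := sym_eq_basic (tW c _ (isDer_lmul (f i) (eD i))) (tW (c * f i) _ (eD i))
  (sb_scale c (f i) [::] v (e i)).
exact: sym_eq_cat e1 IH.
Qed.

Section DualBasis.
Variables (n : nat) (ds : 'I_n -> op) (phis : 'I_n -> op -> A).
Hypothesis dsD : forall j, isDer (ds j).
Hypothesis phis_linear : forall j (a : A) d e, isDer d -> isDer e ->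
  phis j (fun x => a * d x + e x) = a * phis j d + phis j e.
Hypothesis dual_basis : forall d, isDer d -> forall x, d x = \sum_(j < n) phis j d * ds j x.

Lemma phis_zero j : phis j (fun=> 0) = 0.
Proof.
have := phis_linear j 1 isDer_zero isDer_zero.
have -> : (fun x => 1 * (fun _ : A => 0 : A) x + 0) = (fun=> 0).
  by apply: functional_extensionality => x; rewrite mulr0 addr0.
by rewrite mul1r => h; apply: (addrI (phis j (fun=> 0))); rewrite addr0 -h.
Qed.

Lemma phisD j (d e : op) : isDer d -> isDer e ->
  phis j (fun x => d x + e x) = phis j d + phis j e.
Proof.
move=> dD eD; rewrite -[phis j d]mul1r -phis_linear //; congr (phis j _).
by apply: functional_extensionality => x; rewrite mul1r.
Qed.

Lemma phis_lmul j c (d : op) : isDer d -> phis j (fun x => c * d x) = c * phis j d.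
Proof.
move=> dD; rewrite -[c * _]addr0 -(phis_zero j) -phis_linear //; last exact: isDer_zero.
by congr (phis j _); apply: functional_extensionality => x; rewrite addr0.
Qed.

Lemma phis_rmul j c (d : op) : isDer d -> phis j (fun x => d x * c) = phis j d * c.
Proof.
move=> dD; rewrite mulrC -phis_lmul //; congr (phis j _).
by apply: functional_extensionality => x; rewrite mulrC.
Qed.

Lemma phis_sum j (I : Type) (r : seq I) (F : I -> op) :
  (forall i, List.In i r -> isDer (F i)) ->
  phis j (fun x => \sum_(i <- r) F i x) = \sum_(i <- r) phis j (F i).
Proof.
elim: r => [|i r IH] FD; first by rewrite fun_sum_nil phis_zero big_nil.
have FrD : forall i, List.In i r -> isDer (F i) by move=> i' ri'; apply: FD; right.
rewrite fun_sum_cons phisD ?big_cons ?IH //; first by apply: FD; left.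
exact: isDer_sum.
Qed.

Lemma phis_pair_sum_ev j m Fs (s : terms) : wf_sum m s ->
  phis j (fun a => pair_sum (ev a :: Fs) s) = pair_sum (phis j :: Fs) s.
Proof.
move=> sW; have tD t i : List.In t s -> List.In i (index_iota 0 (size t.2)) ->
    isDer (fun a => nth id t.2 i a * pair_word Fs (rem_nth i t.2)).
  by move=> /sW [_ tD] /In_index_iota si; apply/isDer_rmul/allDer_nth.
rewrite /pair_sum /= (@phis_sum j _ s (fun t a => t.1 * \sum_(0 <= i < size t.2)
    nth id t.2 i a * pair_word Fs (rem_nth i t.2))); last first.
  by move=> t st; apply/isDer_lmul/isDer_sum => i; apply: tD.
apply: eq_big_In => t st; rewrite phis_lmul; last by apply: isDer_sum => i; apply: tD.
rewrite (@phis_sum j _ _ (fun i a => nth id t.2 i a * pair_word Fs (rem_nth i t.2))).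
  congr (_ * _); apply: eq_big_In => i /In_index_iota si.
  by rewrite phis_rmul //; apply: allDer_nth si; case: (sW t st).
by move=> i; apply: tD.
Qed.

Lemma pair_sum_phis_vanish m (s : terms) : wf_sum m s ->
  (forall l, size l = m -> pair_sum (map ev l) s = 0) ->
  forall js : seq 'I_n, size js = m -> pair_sum (map phis js) s = 0.
Proof.
elim: m s => [|m IH] s sW s0 [|j js] // sjs; first exact: (s0 [::]).
rewrite /= -pair_sum_contract; apply: (IH _ (wf_contract sW) _ js) => [l sl|]; last by case: sjs.
rewrite pair_sum_contract -(phis_pair_sum_ev j _ sW).
have -> : (fun a => pair_sum (ev a :: map ev l) s) = (fun=> 0).
  by apply: functional_extensionality => a; apply: (s0 (a :: l)); rewrite /= sl.
exact: phis_zero.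
Qed.

Lemma sym_eq_expand (c : A) (e : op) (v : seq op) : isDer e -> allDer v ->
  sym_eq (size v).+1 [:: (c, e :: v)] [seq (c * phis j e, ds j :: v) | j <- index_enum 'I_n].
Proof.
move=> eD vD; apply: sym_eq_trans (sym_eq_split_der _ c (fun j => phis j e) dsD vD).
have sumD : isDer (fun x => \sum_(j < n) phis j e * ds j x).
  by apply: isDer_sum => j _; apply: isDer_lmul.
apply: sym_eq_basic (sb_ext c [::] v (dual_basis eD)).
  by move=> t [<-|[]]; split=> //; apply/allDer_cons.
by move=> t [<-|[]]; split=> //; apply/allDer_cons.
Qed.

(* For [b = 1/m] on [Sym^m], [s = euler_sum b s] is Euler's identity
   [s = 1/m sum_j d_j (contraction of s with phi_j)]. *)
Definition euler_sum (b : A) (s : terms) : terms :=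
  flatten [seq mul_der (ds j) b (contract (phis j) s) | j <- index_enum 'I_n].

Lemma wf_euler_sum m b (s : terms) : wf_sum m.+1 s -> wf_sum m.+1 (euler_sum b s).
Proof. by move=> sW; apply: wf_flatten => j _; apply/wf_mul_der/wf_contract. Qed.

Lemma euler_sum_cons b t (s : terms) :
  Permutation (euler_sum b [:: t] ++ euler_sum b s) (euler_sum b (t :: s)).
Proof.
apply: perm_trans (perm_flatten_cat _ _ _) (Permutation_refl' _).
rewrite /euler_sum /contract /=; congr flatten.
by apply: eq_map => j; rewrite cats0 /mul_der map_cat.
Qed.

Lemma sym_eq_euler_term m (b c : A) (w : seq op) :
  b * m.+1%:R = 1 -> size w = m.+1 -> allDer w ->
  sym_eq m.+1 [:: (c, w)] (euler_sum b [:: (c, w)]).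
Proof.
move=> bm sw wD; set I := index_iota 0 (size w).
pose X i j := (b * c * phis j (nth id w i), ds j :: rem_nth i w).
have XW i j : List.In i I -> wf_sum m.+1 [:: X i j].
  move=> /In_index_iota si t [<-|[]]; split; first by rewrite /= size_rem_nth // sw.
  by apply/allDer_cons; split; [apply: dsD | apply: allDer_rem_nth].
have -> : euler_sum b [:: (c, w)] =
    flatten [seq flatten [seq [:: X i j] | i <- I] | j <- index_enum 'I_n].
  rewrite /euler_sum /contract /=; congr flatten; apply: eq_map => j.
  by rewrite cats0 /mul_der -map_comp flatten_map1; apply: eq_map => i; rewrite /X /= mulrA.
apply: sym_eq_trans (sym_eq_perm _ (perm_flatten_transpose _ _ _)); last first.
  by apply: wf_flatten => i iI; apply: wf_flatten => j _; apply: XW.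
have {1}-> : c = \sum_(i <- I) b * c.
  by rewrite sumr_const_nat subn0 sw -mulr_natr mulrAC bm mul1r.
apply: sym_eq_trans (sym_eq_sym (sym_eq_merge I (fun=> b * c) sw wD)) _.
rewrite -flatten_map1; apply: sym_eq_flatten => i /In_index_iota si.
have sdw : size (rem_nth i w) = m by rewrite size_rem_nth // sw.
apply: sym_eq_trans (_ : sym_eq _ [:: (b * c, nth id w i :: rem_nth i w)] _).
  have := sym_eq_move (b * c) (p := [::]) (d := nth id w i) (u := take i w) (v := drop i.+1 w).
  rewrite /= -(cat_take_nth_drop id si) => mv; apply: sym_eq_sym; apply: mv.
    by rewrite -sdw /rem_nth.
  by apply/allDer_cons; split; [apply: allDer_nth | apply: allDer_rem_nth].
have := sym_eq_expand (b * c) (allDer_nth wD si) (allDer_rem_nth (i := i) wD).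
by rewrite sdw flatten_map1.
Qed.

Lemma sym_eq_euler m (b : A) (s : terms) : b * m.+1%:R = 1 -> wf_sum m.+1 s ->
  sym_eq m.+1 s (euler_sum b s).
Proof.
move=> bm; elim: s => [_|[c w] s IH /wf_cons [[/= sw wD] sW]].
  by apply: sym_eq_sym; apply: sym_eq_flatten0 => j _; apply: sym_eq_refl.
have tW : wf_sum m.+1 [:: (c, w)] by move=> t [<-|[]].
apply: sym_eq_trans (sym_eq_perm _ (euler_sum_cons _ _ _)).
  exact: (sym_eq_cat (s1 := [:: (c, w)]) (sym_eq_euler_term c bm sw wD) (IH sW)).
by apply/wf_cat; split; apply: wf_euler_sum.
Qed.

Lemma sym_eq0_of_pair_sum_phis m (s : terms) : contains_Q A -> wf_sum m s ->
  (forall js, size js = m -> pair_sum (map phis js) s = 0) -> sym_eq m s [::].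
Proof.
move=> HQ; elim: m s => [|m IH] s sW s0.
  have sE : s = [seq (t.1, [::]) | t <- s].
    elim: s sW {s0} => [|[c w] s IH] // /wf_cons [[/= sw _] /IH {1}->].
    by case: w sw.
  have := s0 [::] erefl; rewrite sE /pair_sum big_map /=.
  under eq_bigr do rewrite mulr1.
  have nilD : allDer [::] by [].
  move=> sum0; apply: sym_eq_trans (sym_eq_merge s (fun t => t.1) erefl nilD) _.
  by rewrite sum0; apply: sym_eq_basic (sb_zero _) => // t [<-|[]].
have [b bm] := HQ m.
apply: sym_eq_trans (sym_eq_euler bm sW) _.
apply: sym_eq_flatten0 => j _; have := sym_eq_mul_der b (dsD j) (IH _ (wf_contract sW) _).
by apply=> js sjs; rewrite pair_sum_contract; apply: (s0 (j :: js)); rewrite /= sjs.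
Qed.

Lemma isDer_phis j (G : A -> op) : (forall c, isDer (G c)) -> (forall a, isDer (fun c => G c a)) ->
  isDer (fun c => phis j (G c)).
Proof.
move=> GD GD'; split; first split=> [x y|r x].
- have -> : G (x + y) = (fun a => G x a + G y a).
    by apply: functional_extensionality => a; case: (GD' a) => [[D _] _]; rewrite D.
  exact: phisD.
- have -> : G (r *: x) = (fun a => (r *: 1) * G x a).
    by apply: functional_extensionality => a; case: (GD' a) => [[_ Z] _]; rewrite Z -scalerAl mul1r.
  by rewrite phis_lmul // -scalerAl mul1r.
move=> x y; have -> : G (x * y) = (fun a => x * G y a + y * G x a).
  by apply: functional_extensionality => a; case: (GD' a) => _ M; rewrite M.
by rewrite phisD ?phis_lmul //; apply: isDer_lmul.
Qed.

Lemma sym_multider_contract m Phi j : sym_multider m.+1 Phi ->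
  sym_multider m (fun l => phis j (fun a => Phi (a :: l))).
Proof.
move=> PM; have Psw := sym_multider_swap PM; case: PM => [PS PD]; split.
  move=> l i si; congr (phis j _); apply: functional_extensionality => a.
  by rewrite Psw; apply: (PS (a :: l) i.+1).
move=> m0 l sl; apply: (@isDer_phis j (fun c a => Phi (a :: c :: l))) => [c|a].
  by apply: PD => //=; rewrite sl prednK.
have -> : (fun c => Phi (a :: c :: l)) = (fun c => Phi (c :: a :: l)).
  by apply: functional_extensionality => c; apply: Psw.
by apply: PD => //=; rewrite sl prednK.
Qed.

Lemma sym_multider_pair_sum m Phi : contains_Q A -> sym_multider m Phi ->
  exists s, wf_sum m s /\ forall l, size l = m -> pair_sum (map ev l) s = Phi l.
Proof.
move=> HQ; elim: m Phi => [|m IH] Phi PM.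
  exists [:: (Phi [::], [::])]; split; first by move=> t [<-|[]].
  by case=> // _; rewrite /pair_sum big_cons big_nil /= mulr1 addr0.
have [b bm] := HQ m.
have Sj j : {s | wf_sum m s /\ forall l, size l = m ->
                  pair_sum (map ev l) s = phis j (fun a => Phi (a :: l))}.
  exact/constructive_indefinite_description/IH/sym_multider_contract.
exists (flatten [seq mul_der (ds j) b (sval (Sj j)) | j <- index_enum 'I_n]); split.
  by apply: wf_flatten => j _; apply: wf_mul_der (proj1 (svalP (Sj j))).
move=> l sl; rewrite pair_sum_flatten.
have Sj_pair j : pair_sum (map ev l) (mul_der (ds j) b (sval (Sj j))) =
   b * \sum_(0 <= p < size l) phis j (fun a => Phi (a :: rem_nth p l)) * ds j (nth 0 l p).
  rewrite pair_sum_mul_der size_map; congr (_ * _); apply: eq_big_nat => p /andP [_ sp].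
  rewrite (nth_map 0) // rem_nth_map (proj2 (svalP (Sj j))) /ev 1?mulrC //.
  by rewrite size_rem_nth // sl.
under eq_bigr do rewrite Sj_pair.
rewrite -big_distrr exchange_big /=.
have -> : \sum_(0 <= p < size l) \sum_(j <- index_enum 'I_n)
     phis j (fun a => Phi (a :: rem_nth p l)) * ds j (nth 0 l p) = \sum_(0 <= p < size l) Phi l.
  apply: eq_big_nat => p /andP [_ sp].
  rewrite -(dual_basis _ (nth 0 l p)); first exact: PM.1.
  by apply: PM.2 => //; rewrite size_rem_nth // sl.
by rewrite sumr_const_nat subn0 sl -mulr_natr mulrCA bm mulr1.
Qed.

End DualBasis.
End DiffOps.

Theorem mainTheorem17 (k : comNzRingType) (A : comAlgType k) :
  contains_Q A -> Der_fg_projective A ->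
  forall i : nat,
    (forall phi : A -> A, diffop i phi ->
       exists s : seq (term A), wf_sum i s /\
         ord_lt i (fun x => phi x - tau s x)) /\
    (forall s : seq (term A), wf_sum i s -> ord_lt i (tau s) -> sym_eq i s [::]).
Proof.
move=> HQ [n [ds [phis [dsD _ phisL dual]]]] i; split.
- move=> phi phii.
  have [s [sW sE]] := sym_multider_pair_sum dsD phisL dual HQ (symbol_multider phii).
  exists s; split=> //.
  apply: ord_lt_iter_commut (diffopB phii (tau_diffop sW)) _ => l sl x.
  rewrite iter_commutB (iter_commut_tau sW sl) sE //.
  have phil0 : diffop 0 (iter_commut phi l) by apply: diffop_iter_commut sl; rewrite addn0.
  by rewrite (diffop0E phil0 x) subrr.
- move=> s sW st; apply: (sym_eq0_of_pair_sum_phis dsD dual HQ sW) => js sjs.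
  apply: (pair_sum_phis_vanish phisL sW) => // l sl.
  by have := iter_commut_vanish st sl 1; rewrite (iter_commut_tau sW sl) mulr1.
Qed.
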